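(* Let $n\geq 1$ and let $M$ be a complex $n\times n$ matrix. Then $M$ is a complex Hadamard matrix if and only if every entry of $M$ has complex norm $1$ and every eigenvalue of $M$ has complex norm $\sqrt{n}$.
   Context: A complex Hadamard matrix of order $n$ is an $n\times n$ complex matrix $M$ all of whose entries have complex norm $1$ and which satisfies $MM^{\ast}=nI_n$, where $M^\ast$ is the conjugate transpose of $M$ and $I_n$ the identity matrix. *)

From HB Require Import structures.
From mathcomp Require Import all_boot all_order all_algebra.
From mathcomp Require Import reals.
From mathcomp.real_closed Require Import complex.
Set Implicit Arguments. Unset Strict Implicit. Unset Printing Implicit Defensive.
Import Order.TTheory GRing.Theory Num.Theory.
Local Open Scope ring_scope.

Definition conjT (C : numClosedFieldType) (n : nat) (M : 'M[C]_n) : 'M[C]_n :=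
  (map_mx Num.conj M)^T.

Definition complex_hadamard (C : numClosedFieldType) (n : nat) (M : 'M[C]_n) : Prop :=
  (forall i j, `|M i j| = 1) /\ M *m conjT M = n%:R%:M.

From HB Require Import structures.
From mathcomp Require Import all_boot all_order all_algebra.
From mathcomp Require Import reals.
From mathcomp.real_closed Require Import complex.
From mathcomp Require Import sesquilinear spectral.
Set Implicit Arguments. Unset Strict Implicit. Unset Printing Implicit Defensive.
Import Order.TTheory GRing.Theory Num.Theory.
Local Open Scope ring_scope.

(* If [M M^* = n I], an eigenvector [v M = l v] gives [|l|^2 v v^* = (v M) (v M)^* = n v v^*],
   so [|l| = sqrt n].  Conversely, write [M = P^* T P] with [P] unitary and [T] upper
   triangular (Schur).  Unitary conjugation preserves the Frobenius norm [\sum |M_ij|^2],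
   which is [n^2] for a matrix with unimodular entries; the diagonal of [T] consists of
   eigenvalues, of squared modulus [n], and already accounts for [n^2].  Hence [T] is
   diagonal with [T T^* = n I], and so [M M^* = n I]. *)

Section NumClosedMatrices.
Variable C : numClosedFieldType.
Local Open Scope sesquilinear_scope.

Lemma conjTE n (M : 'M[C]_n) : conjT M = M ^t*.
Proof. by rewrite /conjT map_trmx. Qed.

Lemma trmxC_mul m n p (A : 'M[C]_(m, n)) (B : 'M[C]_(n, p)) :
  (A *m B) ^t* = B ^t* *m A ^t*.
Proof. by rewrite trmx_mul map_mxM. Qed.

Lemma unitarymx_mulKl n (P : 'M[C]_n) : P \is unitarymx -> P ^t* *m P = 1%:M.
Proof. by rewrite -trmxC_unitary => /unitarymxP; rewrite trmxCK. Qed.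

Lemma mxtrace_mul_trmxC m n (A : 'M[C]_(m, n)) :
  \tr (A *m A ^t*) = \sum_i \sum_j `|A i j| ^+ 2.
Proof.
apply: eq_bigr => i _; rewrite !mxE; apply: eq_bigr => j _.
by rewrite !mxE normCK.
Qed.

Lemma mxtrace_mul_trmxC_unimodular m n (A : 'M[C]_(m, n)) :
  (forall i j, `|A i j| = 1) -> \tr (A *m A ^t*) = m%:R *+ n.
Proof.
move=> normA; rewrite mxtrace_mul_trmxC.
under eq_bigr do under eq_bigr do rewrite normA expr1n.
by rewrite !sumr_const !card_ord mulrnAC.
Qed.

Lemma mxtrace_mul_trmxC_unitary n (P A : 'M[C]_n) : P \is unitarymx ->
  \tr ((P *m A *m P ^t*) *m (P *m A *m P ^t*) ^t*) = \tr (A *m A ^t*).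
Proof.
move=> Pu; rewrite !trmxC_mul trmxCK !mulmxA mulmxKtV // mxtrace_mulC.
by rewrite !mulmxA unitarymx_mulKl // mul1mx.
Qed.

Lemma is_diag_mx_sum_norm n (A : 'M[C]_n) :
  \sum_i \sum_j `|A i j| ^+ 2 = \sum_i `|A i i| ^+ 2 -> is_diag_mx A.
Proof.
under eq_bigr => i _ do rewrite (bigD1 i) //=.
rewrite big_split /= -[RHS]addr0 => /addrI offdiag0.
have offdiag_ge0 i : 0 <= \sum_(j | j != i) `|A i j| ^+ 2.
  by apply: sumr_ge0 => j _; apply: exprn_ge0.
apply/is_diag_mxP => i j; rewrite val_eqE eq_sym => ji.
have row_i0 : \sum_(k | k != i) `|A i k| ^+ 2 = 0.
  by apply: (psumr_eq0P (fun k _ => offdiag_ge0 k) offdiag0).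
have /eqP := psumr_eq0P (fun k _ => exprn_ge0 2 (normr_ge0 (A i k))) row_i0 ji.
by rewrite sqrf_eq0 normr_eq0 => /eqP.
Qed.

Lemma diag_mul_trmxC n (D : 'M[C]_n) c : is_diag_mx D ->
  (forall i, `|D i i| ^+ 2 = c) -> D *m D ^t* = c%:M.
Proof.
move=> /is_diag_mxP D0 normD; apply/matrixP => i k; rewrite !mxE.
rewrite (bigD1 i) //= big1 ?addr0 => [|j ji]; rewrite !mxE; last first.
  by rewrite D0 ?mul0r // val_eqE eq_sym.
have [<-|ik] := eqVneq i k; first by rewrite -normCK normD.
by rewrite (D0 k) ?rmorph0 ?mulr0 // val_eqE eq_sym.
Qed.

Lemma eigenvalue_sqr_norm n (M : 'M[C]_n) c l :
  M *m M ^t* = c%:M -> eigenvalue M l -> `|l| ^+ 2 = c.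
Proof.
move=> MMt /eigenvalueP [v vM vN0].
have vvt_gt0 : 0 < (v *m v ^t*) 0 0 by rewrite -dotmxE dotmx_is_dotmx.
apply: (mulIf (lt0r_neq0 vvt_gt0)).
have -> : `|l| ^+ 2 * (v *m v ^t*) 0 0 = ((v *m M) *m (v *m M) ^t*) 0 0.
  rewrite vM !mxE mulr_sumr; apply: eq_bigr => k _.
  by rewrite !mxE rmorphM normCK mulrACA.
by rewrite trmxC_mul mulmxA -(mulmxA v) MMt mul_mx_scalar -scalemxAl mxE.
Qed.

Lemma eigenvalue_trig_diag n (T : 'M[C]_n) i : is_trig_mx T -> eigenvalue T (T i i).
Proof.
move=> Ttrig; rewrite eigenvalue_root_char char_poly_trig // /root horner_prod.
by apply/prodf_eq0; exists i => //; rewrite hornerXsubC subrr.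
Qed.

Lemma mul_trmxC_scalar_of_eigenvalues n (M : 'M[C]_n) c : (0 < n)%N ->
  \tr (M *m M ^t*) = c *+ n -> (forall l, eigenvalue M l -> `|l| ^+ 2 = c) ->
  M *m M ^t* = c%:M.
Proof.
move=> n_gt0 trM normEig; have [P Pu Ttrig] := Schur M n_gt0.
have Punit := unitarymx_unit Pu.
move: Ttrig; rewrite /similar_to conjymx //; set T := P *m M *m P ^t* => Ttrig.
have normTdiag i : `|T i i| ^+ 2 = c.
  apply/normEig/(eigenvalue_conjmx (stablemx_unit M Punit)).
    by rewrite row_free_unit.
  by rewrite conjymx //; apply: eigenvalue_trig_diag.
have Tdiag : is_diag_mx T.
  apply: is_diag_mx_sum_norm; rewrite -mxtrace_mul_trmxC.
  rewrite mxtrace_mul_trmxC_unitary // trM.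
  by under eq_bigr do rewrite normTdiag; rewrite sumr_const card_ord.
have ME : M = P ^t* *m T *m P.
  by rewrite !mulmxA unitarymx_mulKl // mul1mx mulmxKtV.
clearbody T; rewrite ME !trmxC_mul trmxCK !mulmxA mulmxtVK // -(mulmxA _ T).
rewrite (diag_mul_trmxC Tdiag normTdiag) mul_mx_scalar -scalemxAl.
by rewrite unitarymx_mulKl // scalemx1.
Qed.

End NumClosedMatrices.

Local Open Scope complex_scope.

Theorem lemma2p2 (R : realType) (n : nat) (hn : (0 < n)%N) (M : 'M[R[i]]_n) :
  complex_hadamard M <->
  ((forall i j, `|M i j| = 1) /\
   (forall lambda : R[i], eigenvalue M lambda -> `|lambda| = sqrtC (n%:R : R[i]))).
Proof.
have norm_sqrtE (l : R[i]) : (`|l| = sqrtC n%:R) <-> (`|l| ^+ 2 = n%:R).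
  by split=> [->|<-]; rewrite ?sqrtCK ?sqrCK.
rewrite /complex_hadamard conjTE.
split=> [[normM MMt]|[normM normEig]]; split=> //.
  by move=> l /(eigenvalue_sqr_norm MMt)/norm_sqrtE.
apply: mul_trmxC_scalar_of_eigenvalues => // [|l /normEig/norm_sqrtE //].
exact: mxtrace_mul_trmxC_unimodular.
Qed.
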